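(* There is an absolute constant $C>0$ such that for every $N\in\mathbb{N}$, all functions $f_0,f_1,f_2\colon\mathbb{Z}^2\to\mathbb{C}$ with $|f_i|\le1$ supported in $[\pm2N]^2$, and every $f_3\colon\mathbb{Z}\to\mathbb{C}$ with $|f_3|\le1$ supported in $[N]$, \[ \Big|\mathbb{E}_{x\in[\pm2N]^2,\,n\in[N]}f_0(x)f_1(x+ne_1)f_2(x+ne_2)f_3(n)\Big|\le CN^{-1/2}\|f_3\|_{U^3}, \] where $e_1=(1,0)$, $e_2=(0,1)$.
   Context: $[N]=\{1,\dots,N\}$, $[\pm N]=[-N,N]\cap\mathbb{Z}$, $\mathbb{E}_{a\in A}$ is the average over the finite set $A$. For $f\colon\mathbb{Z}\to\mathbb{C}$ and $h\in\mathbb{Z}$, $\Delta_hf(x)=f(x)\overline{f(x+h)}$, $\Delta_{h_1,\dots,h_s}=\Delta_{h_1}\cdots\Delta_{h_s}$. For finitely supported $f$, the unnormalised Gowers norm is $\|f\|_{U^s}=\big(\sum_{x,h_1,\dots,h_s\in\mathbb{Z}}\Delta_{h_1,\dots,h_s}f(x)\big)^{1/2^s}$. *)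

From mathcomp Require Import all_boot all_algebra.
From mathcomp Require Import all_classical all_reals all_analysis.
From mathcomp Require Import complex.
Import GRing.Theory Num.Theory.
Local Open Scope ring_scope.

Definition irange (a b : int) : seq int :=
  [seq a + (k%:Z) | k <- iota 0 (absz (b - a + 1))].

Definition cmod {R : rcfType} (z : R[i]) : R := @complex.Re R `|z|.

Definition Delta {R : rcfType} (h : int) (f : int -> R[i]) : int -> R[i] :=
  fun x => f x * Num.conj (f (x + h)).

(* unnormalised U^3 Gowers norm of a finitely supported f : Z -> C:
   ( sum_{x,h1,h2,h3 in Z} Delta_{h1,h2,h3} f(x) )^(1/8),
   sums over Z being finite-support sums (fsbig). The sum is a
   nonnegative real, so we take its modulus before the real 1/8 power. *)
Definition gowersU3 {R : realType} (f : int -> R[i]) : R :=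
  powR (cmod (\sum_(x \in [set: int]) \sum_(h1 \in [set: int])
               \sum_(h2 \in [set: int]) \sum_(h3 \in [set: int])
                 Delta h1 (Delta h2 (Delta h3 f)) x)) (8^-1).

From mathcomp Require Import all_boot all_algebra.
From mathcomp Require Import all_classical all_reals all_analysis.
From mathcomp Require Import complex.
From mathcomp Require Import zify ring lra.
Import GRing.Theory Num.Theory order.Order.TTheory.
Local Open Scope ring_scope.

(* Write the average as a sum of f0(x) F(x), with
   F(x) = sum_n f1(x + n e1) f2(x + n e2) f3(n).  Three rounds of
   Cauchy-Schwarz remove f0, f1 and f2 in turn: after each one, translating
   x along the direction of the function just removed (first along e1, then
   along e1 - e2) and writing the second copy of n as n + h turns the
   square into a sum of multiplicative derivatives of the next function.
   This gives |sum_x f0 F|^8 <= w^20 sum_(h,k) |sum_n Delta_(h,k) f3(n)|^2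
   = w^20 ||f3||_(U^3)^8, where w = 8N + 1 <= 9N is the width of a window
   holding all supports; the normalisation (4N+1)^2 N >= N^3 then yields
   the constant 9^3. *)

Lemma mem_irange (a b x : int) : a <= b -> (x \in irange a b) = (a <= x <= b).
Proof.
move=> le_ab; apply/mapP/idP => [[k]|/andP[le_ax le_xb]].
  by rewrite mem_iota => /andP[_ lt_k] ->; apply/andP; split; lia.
by exists (absz (x - a)); [rewrite mem_iota; apply/andP; split|]; lia.
Qed.

Lemma irange_uniq (a b : int) : uniq (irange a b).
Proof. by rewrite map_inj_uniq ?iota_uniq // => i j /addrI []. Qed.

Lemma size_irange (a b : int) : size (irange a b) = absz (b - a + 1).
Proof. by rewrite size_map size_iota. Qed.

Lemma sumr_const_seq (V : nmodType) (I : Type) (s : seq I) (c : V) :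
  \sum_(i <- s) c = c *+ size s.
Proof. by rewrite big_const_seq count_predT iter_addr_0. Qed.

Section SumsOverSeqs.
Variables (V : nmodType) (T : eqType).

Lemma sumr_neq0 (s : seq T) (F : T -> V) :
  \sum_(x <- s) F x != 0 -> exists2 x, x \in s & F x != 0.
Proof.
move=> sum_neq0; have [//|no_x] := pselect (exists2 x, x \in s & F x != 0).
move: sum_neq0; rewrite big_seq big1 ?eqxx // => x xs.
by have [//|Fx] := eqVneq (F x) 0; case: no_x; exists x.
Qed.

Lemma big_uniq_supp (s t : seq T) (F : T -> V) :
  uniq s -> uniq t -> (forall x, F x != 0 -> (x \in s) && (x \in t)) ->
  \sum_(x <- s) F x = \sum_(x <- t) F x.
Proof.
move=> s_uniq t_uniq suppF.
have drop_out (u v : seq T) : (forall x, F x != 0 -> x \in v) ->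
    \sum_(x <- u) F x = \sum_(x <- u | x \in v) F x.
  move=> suppFv; rewrite (bigID (mem v)) /= [X in _ + X]big1 ?addr0 => [//|x xv].
  by apply/eqP; apply: contraNT xv; apply: suppFv.
rewrite (drop_out s t); last by move=> x /suppF /andP[].
rewrite (drop_out t s); last by move=> x /suppF /andP[].
rewrite -[LHS]big_filter -[RHS]big_filter.
apply/perm_big/uniq_perm; rewrite ?filter_uniq // => x.
by rewrite !mem_filter andbC.
Qed.

End SumsOverSeqs.

Lemma fsbig_setT_seq {V : nmodType} {T : choiceType} (F : T -> V) (s : seq T) :
  uniq s -> (forall x, F x != 0 -> x \in s) ->
  \sum_(x \in [set: T]) F x = \sum_(x <- s) F x.
Proof.
move=> s_uniq suppF; rewrite (@bigfs V 0 +%R T s predT F s_uniq) => [|x _ xs].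
  by apply: eq_fsbigl; apply/seteqP; split.
by apply/eqP; apply: contraNT xs; apply: suppF.
Qed.

Lemma big_translate {V : nmodType} {G : zmodType} (s : seq G) (c : G) (F : G -> V) :
  uniq s -> (forall x, F x != 0 -> (x \in s) && (x - c \in s)) ->
  \sum_(x <- s) F (x + c) = \sum_(x <- s) F x.
Proof.
move=> s_uniq suppF; rewrite -(big_map (+%R^~ c) xpredT F).
apply: big_uniq_supp; rewrite ?map_inj_uniq //; first exact: addIr.
move=> x /suppF /andP[xs xc]; rewrite xs andbT; apply/mapP; exists (x - c) => //.
by rewrite subrK.
Qed.

Lemma sqr_sumr_le {R : realFieldType} {I : Type} (s : seq I) (a : I -> R) :
  (\sum_(i <- s) a i) ^+ 2 <= (size s)%:R * \sum_(i <- s) a i ^+ 2.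
Proof.
set S := \sum_(i <- s) a i; set Q := \sum_(i <- s) a i ^+ 2; set n := (size s)%:R.
have inner i : \sum_(j <- s) (a i - a j) ^+ 2 = n * a i ^+ 2 - (a i * S) *+ 2 + Q.
  under eq_bigr do rewrite sqrrB.
  by rewrite big_split sumrB sumr_const_seq sumrMnl -mulr_sumr mulr_natl.
have : 0 <= \sum_(i <- s) \sum_(j <- s) (a i - a j) ^+ 2.
  by apply: sumr_ge0 => i _; apply: sumr_ge0 => j _; exact: sqr_ge0.
under eq_bigr do rewrite inner.
rewrite big_split sumrB sumr_const_seq sumrMnl -mulr_sumr -mulr_suml -/S -/Q mulr_natl.
rewrite expr2 mulr2n => /= ?; lra.
Qed.

Lemma sqr_sumr2_le {R : realFieldType} {I J : Type} (s : seq I) (t : seq J)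
    (a : I -> J -> R) :
  (\sum_(i <- s) \sum_(j <- t) a i j) ^+ 2 <=
    (size s * size t)%:R * \sum_(i <- s) \sum_(j <- t) a i j ^+ 2.
Proof.
have := sqr_sumr_le [seq (i, j) | i <- s, j <- t] (fun p => a p.1 p.2).
by rewrite size_allpairs !big_allpairs.
Qed.

Section ComplexModulus.
Context {R : rcfType}.
Implicit Types x y : R[i].
Local Open Scope complex_scope.

Lemma cmodE x : `|x| = (cmod x)%:C.
Proof. by rewrite /cmod normc_def. Qed.

Lemma cmod_ge0 x : 0 <= cmod x.
Proof. by rewrite -ler0c -cmodE. Qed.

Lemma cmod_real (r : R) : 0 <= r -> cmod r%:C = r.
Proof. by move=> r_ge0; apply: complexI; rewrite -cmodE ger0_norm // ler0c. Qed.

Lemma cmodM x y : cmod (x * y) = cmod x * cmod y.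
Proof. by apply: complexI; rewrite rmorphM -!cmodE normrM. Qed.

Lemma cmodJ x : cmod x^* = cmod x.
Proof. by apply: complexI; rewrite -!cmodE norm_conjC. Qed.

Lemma cmodV_nat (n : nat) : cmod (n%:R : R[i])^-1 = (n%:R : R)^-1.
Proof. by rewrite -(rmorph_nat (@real_complex R)) -fmorphV cmod_real // invr_ge0. Qed.

Lemma mulrJ_cmod x : x * x^* = (cmod x ^+ 2)%:C.
Proof. by rewrite -normCK cmodE -rmorphXn. Qed.

Lemma ler_cmod_sum {I : Type} (s : seq I) (F : I -> R[i]) :
  cmod (\sum_(i <- s) F i) <= \sum_(i <- s) cmod (F i).
Proof.
rewrite -lecR -cmodE raddf_sum (eq_bigr _ (fun i _ => esym (cmodE (F i)))).
exact: ler_norm_sum.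
Qed.

Lemma cmod_mul_le x y : cmod x <= 1 -> cmod (x * y) <= cmod y.
Proof. by move=> x_le1; rewrite cmodM ler_piMl ?cmod_ge0. Qed.

Lemma cmod_mulJ_le1 x y : cmod x <= 1 -> cmod y <= 1 -> cmod (x * y^*) <= 1.
Proof.
by move=> x_le1 y_le1; apply: (le_trans (cmod_mul_le _ _ x_le1)); rewrite cmodJ.
Qed.

Lemma cmod_sum_le_size {I : Type} (s : seq I) (F : I -> R[i]) :
  (forall i, cmod (F i) <= 1) -> cmod (\sum_(i <- s) F i) <= (size s)%:R.
Proof.
move=> F_le1; apply: (le_trans (ler_cmod_sum s F)).
by rewrite -[_%:R]mul1r mulr_natr -sumr_const_seq; apply: ler_sum.
Qed.

Lemma sum_mulrJ_cmod {I : Type} (s : seq I) (F : I -> R[i]) :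
  \sum_(i <- s) F i * (F i)^* = (\sum_(i <- s) cmod (F i) ^+ 2)%:C.
Proof. by rewrite raddf_sum; apply: eq_bigr => i _; rewrite mulrJ_cmod. Qed.

Lemma Delta_neq0 (g : int -> R[i]) h n :
  Delta h g n != 0 -> (g n != 0) && (g (n + h) != 0).
Proof. by rewrite /Delta mulf_eq0 negb_or conjC_eq0. Qed.

End ComplexModulus.

Lemma mulr_sumJ {C : numClosedFieldType} {I : Type} (s : seq I) (T : I -> C) :
  (\sum_(n <- s) T n) * (\sum_(n <- s) T n)^* =
    \sum_(n <- s) \sum_(m <- s) T n * (T m)^*.
Proof.
by rewrite rmorph_sum mulr_suml; apply: eq_bigr => n _; rewrite mulr_sumr.
Qed.

Lemma ler_normalised_pow8 (R : realType) (X Z : R) (w N c : nat) :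
  (0 < N)%N -> (w <= 9 * N)%N -> (N ^ 3 <= c)%N -> 0 <= X -> 0 <= Z ->
  X ^+ 8 <= w%:R ^+ 20 * Z ->
  c%:R^-1 * X <= (9 ^ 3)%:R * (Num.sqrt N%:R)^-1 * Z `^ 8^-1.
Proof.
move=> N_gt0 le_w le_c X_ge0 Z_ge0 X8.
set P := Z `^ 8^-1; set r := Num.sqrt (N%:R : R).
have P_ge0 : 0 <= P by exact: powR_ge0.
have P8 : P ^+ 8 = Z by rewrite -powR_mulrn // -powRrM mulVf ?powRr1.
have r_gt0 : 0 < r by rewrite sqrtr_gt0 ltr0n.
have r8 : r ^+ 8 = N%:R ^+ 4 by rewrite -[8%N]/(2 * 4)%N exprM sqr_sqrtr ?ler0n.
have nat_bound : (w ^ 20 * N ^ 4 <= c ^ 8 * (9 ^ 3) ^ 8)%N.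
  apply: (@leq_trans ((9 * N) ^ 20 * N ^ 4)).
    by rewrite leq_mul2r leq_exp2r // le_w orbT.
  rewrite expnMn -mulnA -expnD mulnC -expnM.
  apply: leq_mul; last exact: leq_pexp2l.
  by rewrite (_ : (20 + 4 = 3 * 8)%N) // expnM leq_exp2r.
have c_gt0 : (0 < c)%N by apply: leq_trans le_c; rewrite expn_gt0 N_gt0.
have rhs_ge0 : 0 <= c%:R * ((9 ^ 3)%:R * r^-1 * P) :> R.
  by rewrite !mulr_ge0 // invr_ge0 ltW.
rewrite ler_pdivrMl ?ltr0n // -(ler_pXn2r (_ : 0 < 8)%N) ?nnegrE //.
have -> : (c%:R * ((9 ^ 3)%:R * r^-1 * P)) ^+ 8 =
    (c ^ 8 * (9 ^ 3) ^ 8)%:R / (N ^ 4)%:R * Z :> R.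
  by rewrite !exprMn exprVn P8 r8 natrM !natrX !mulrA.
apply: (le_trans X8); rewrite ler_wpM2r // ler_pdivlMr ?ltr0n ?expn_gt0 ?N_gt0 //.
by rewrite -natrX -natrM ler_nat.
Qed.

Section CornerAverage.
Variables (R : realType) (N : nat) (f0 f1 f2 : int * int -> R[i]) (f3 : int -> R[i]).
Hypothesis N_gt0 : (0 < N)%N.
Hypothesis f0_le1 : forall x, cmod (f0 x) <= 1.
Hypothesis f1_le1 : forall x, cmod (f1 x) <= 1.
Hypothesis f2_le1 : forall x, cmod (f2 x) <= 1.
Hypothesis f012_supp : forall x : int * int,
  ~ (`|x.1| <= (2 * N)%:Z /\ `|x.2| <= (2 * N)%:Z) ->
  f0 x = 0 /\ f1 x = 0 /\ f2 x = 0.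
Hypothesis f3_supp : forall n : int, ~ (1 <= n /\ n <= N%:Z) -> f3 n = 0.

Let in_box (x : int * int) :=
  (- (2 * N)%:Z <= x.1 <= (2 * N)%:Z) && (- (2 * N)%:Z <= x.2 <= (2 * N)%:Z).

Let in_box_supp x : f0 x != 0 \/ f1 x != 0 \/ f2 x != 0 -> in_box x.
Proof.
rewrite /in_box -!ler_norml => f_neq0.
have [[-> ->] //|out] := pselect (`|x.1| <= (2 * N)%:Z /\ `|x.2| <= (2 * N)%:Z).
have [f0x [f1x f2x]] := f012_supp x out.
by move: f_neq0; rewrite f0x f1x f2x eqxx => -[|[]].
Qed.

Let f0_neq0 x : f0 x != 0 -> in_box x.
Proof. by move=> ?; apply: in_box_supp; left. Qed.
Let f1_neq0 x : f1 x != 0 -> in_box x.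
Proof. by move=> ?; apply: in_box_supp; right; left. Qed.
Let f2_neq0 x : f2 x != 0 -> in_box x.
Proof. by move=> ?; apply: in_box_supp; right; right. Qed.

Let f3_neq0 n : f3 n != 0 -> 1 <= n <= N%:Z.
Proof.
have [[-> ->] //|out] := pselect (1 <= n /\ n <= N%:Z).
by rewrite f3_supp ?eqxx.
Qed.

(* Every translate of a support met below lies in [-4N, 4N], so all sums
   over Z (and Z^2) can be taken over the window W (and W2). *)
Let W := irange (- (4 * N)%:Z) (4 * N)%:Z.
Let W2 := [seq (a, b) | a <- W, b <- W].
Let w := size W.

Let mem_W n : (n \in W) = (- (4 * N)%:Z <= n <= (4 * N)%:Z).
Proof. by rewrite mem_irange //; lia. Qed.

Let mem_W2 x : (x \in W2) = (x.1 \in W) && (x.2 \in W).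
Proof.
case: x => a b; apply/allpairsP/andP => [[[a' b'] [/= aW bW [-> ->]]] //|[aW bW]].
by exists (a, b).
Qed.

Let uniq_W : uniq W. Proof. exact: irange_uniq. Qed.
Let uniq_W2 : uniq W2. Proof. by apply: allpairs_uniq => // -[? ?] [? ?]. Qed.
Let size_W2 : size W2 = (w * w)%N. Proof. exact: size_allpairs. Qed.
Let w_le : (w <= 9 * N)%N. Proof. by rewrite /w size_irange; lia. Qed.

Definition corner_dual (x : int * int) : R[i] :=
  \sum_(n <- W) f1 (x.1 + n, x.2) * f2 (x.1, x.2 + n) * f3 n.

Lemma corner_sum_window :
  \sum_(x1 <- irange (- (2 * N)%:Z) (2 * N)%:Z)
  \sum_(x2 <- irange (- (2 * N)%:Z) (2 * N)%:Z)
  \sum_(n <- irange 1 N%:Z) f0 (x1, x2) * f1 (x1 + n, x2) * f2 (x1, x2 + n) * f3 n =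
  \sum_(x <- W2) f0 x * corner_dual x.
Proof.
have mem_box a :
    a \in irange (- (2 * N)%:Z) (2 * N)%:Z = (- (2 * N)%:Z <= a <= (2 * N)%:Z).
  by rewrite mem_irange //; lia.
have inner a b :
    \sum_(n <- irange 1 N%:Z) f0 (a, b) * f1 (a + n, b) * f2 (a, b + n) * f3 n =
    f0 (a, b) * corner_dual (a, b).
  rewrite /corner_dual mulr_sumr; under [RHS]eq_bigr do rewrite !mulrA.
  apply: big_uniq_supp => [||n]; rewrite ?irange_uniq //.
  rewrite !mulf_eq0 !negb_or => /andP[_ /f3_neq0].
  by rewrite mem_irange // mem_W; lia.
under eq_bigr do under eq_bigr do rewrite inner.
rewrite big_allpairs.
transitivity (\sum_(a <- irange (- (2 * N)%:Z) (2 * N)%:Z)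
                \sum_(b <- W) f0 (a, b) * corner_dual (a, b)).
  apply: eq_bigr => a _; apply: big_uniq_supp => [||b]; rewrite ?irange_uniq //.
  rewrite mulf_eq0 negb_or => /andP[/f0_neq0].
  by rewrite mem_box mem_W /in_box /=; lia.
apply: big_uniq_supp => [||a]; rewrite ?irange_uniq //.
move=> /sumr_neq0[b _]; rewrite mulf_eq0 negb_or => /andP[/f0_neq0].
by rewrite mem_box mem_W /in_box /=; lia.
Qed.

Definition diff_f2 (h : int) (z : int * int) : R[i] := f2 z * (f2 (z.1, z.2 + h))^*.

Definition corner_dual2 (h : int) (y : int * int) : R[i] :=
  \sum_(n <- W) diff_f2 h (y.1 - n, y.2 + n) * Delta h f3 n.

Lemma sum_corner_dual_sqr :
  \sum_(x <- W2) corner_dual x * (corner_dual x)^* =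
  \sum_(h <- W) \sum_(y <- W2) f1 y * (f1 (y.1 + h, y.2))^* * corner_dual2 h y.
Proof.
pose T x n := f1 (x.1 + n, x.2) * f2 (x.1, x.2 + n) * f3 n.
have shift_x n m : \sum_(x <- W2) T x n * (T x m)^* =
    \sum_(y <- W2) T (y + (- n, 0)) n * (T (y + (- n, 0)) m)^*.
  symmetry; apply: (big_translate W2 (- n, 0) (fun x => T x n * (T x m)^*)) => // -[a b].
  rewrite !mulf_eq0 !negb_or.
  move=> /andP[/andP[/andP[/f1_neq0 f1B /f2_neq0 f2B] /f3_neq0 nN] _].
  move: f1B f2B; rewrite /in_box !mem_W2 !mem_W /=; lia.
have shift_m n (y : int * int) : \sum_(m <- W) T y n * (T y m)^* =
    \sum_(h <- W) T y n * (T y (h + n))^*.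
  symmetry; apply: (big_translate W n (fun m => T y n * (T y m)^*)) => // m.
  rewrite mulf_eq0 negb_or conjC_eq0 /T !mulf_eq0 !negb_or.
  move=> /andP[/andP[_ /f3_neq0 nN] /andP[_ /f3_neq0 mN]].
  by rewrite !mem_W; lia.
rewrite /corner_dual; under eq_bigr do rewrite mulr_sumJ.
rewrite exchange_big; under eq_bigr do rewrite exchange_big /=.
under eq_bigr do under eq_bigr do rewrite shift_x.
under eq_bigr do rewrite exchange_big /=.
under eq_bigr do under eq_bigr do rewrite shift_m.
rewrite exchange_big; under eq_bigr do rewrite exchange_big /=.
rewrite exchange_big; apply: eq_bigr => h _; apply: eq_bigr => -[a b] _.
rewrite /corner_dual2 mulr_sumr; apply: eq_bigr => n _.
rewrite /T /diff_f2 /Delta /= !rmorphM addr0 subrK.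
rewrite (_ : a - n + (h + n) = a + h); last by ring.
rewrite (_ : b + (h + n) = b + n + h); last by ring.
rewrite (addrC h n); ring.
Qed.

Definition corr_f2 (h k : int) : R[i] :=
  \sum_(z <- W2) diff_f2 h z * (diff_f2 h (z.1 - k, z.2 + k))^*.

Definition corr_f3 (h k : int) : R[i] := \sum_(n <- W) Delta k (Delta h f3) n.

Lemma sum_corner_dual2_sqr h :
  \sum_(y <- W2) corner_dual2 h y * (corner_dual2 h y)^* =
  \sum_(k <- W) corr_f2 h k * corr_f3 h k.
Proof.
pose U y n := diff_f2 h (y.1 - n, y.2 + n) * Delta h f3 n.
have U_neq0 y n : U y n != 0 -> in_box (y.1 - n, y.2 + n) && (1 <= n <= N%:Z).
  rewrite /U /diff_f2 /Delta !mulf_eq0 !negb_or.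
  by move=> /andP[/andP[/f2_neq0 -> _] /andP[/f3_neq0 -> _]].
have shift_y n m : \sum_(y <- W2) U y n * (U y m)^* =
    \sum_(z <- W2) U (z + (n, - n)) n * (U (z + (n, - n)) m)^*.
  symmetry; apply: (big_translate W2 (n, - n) (fun y => U y n * (U y m)^*)) => // -[a b].
  rewrite mulf_eq0 negb_or => /andP[/U_neq0 + _].
  rewrite /in_box !mem_W2 !mem_W /=; lia.
have shift_m n (z : int * int) : \sum_(m <- W) U z n * (U z m)^* =
    \sum_(k <- W) U z n * (U z (k + n))^*.
  symmetry; apply: (big_translate W n (fun m => U z n * (U z m)^*)) => // m.
  rewrite mulf_eq0 negb_or conjC_eq0 => /andP[/U_neq0/andP[_ nN] /U_neq0/andP[_ mN]].
  by rewrite !mem_W; lia.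
rewrite /corner_dual2; under eq_bigr do rewrite mulr_sumJ.
rewrite exchange_big; under eq_bigr do rewrite exchange_big /=.
under eq_bigr do under eq_bigr do rewrite shift_y.
under eq_bigr do rewrite exchange_big /=.
under eq_bigr do under eq_bigr do rewrite shift_m.
rewrite exchange_big; under eq_bigr do rewrite exchange_big /=.
rewrite exchange_big; apply: eq_bigr => k _.
rewrite /corr_f2 /corr_f3 mulr_suml; apply: eq_bigr => -[a b] _.
rewrite mulr_sumr; apply: eq_bigr => n _.
rewrite /U /= addrK subrK (addrC k n).
rewrite (_ : a + n - (n + k) = a - k); last by ring.
rewrite (_ : b - n + (n + k) = b + k); last by ring.
rewrite {3}/Delta !rmorphM; ring.
Qed.

Let Delta3_neq0 x l k h : Delta l (Delta k (Delta h f3)) x != 0 ->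
  [&& x \in W, l \in W, k \in W & h \in W].
Proof.
move=> /Delta_neq0/andP[/Delta_neq0/andP[/Delta_neq0/andP[x_supp xh_supp]
                                        /Delta_neq0/andP[xk_supp _]]
                       /Delta_neq0/andP[/Delta_neq0/andP[xl_supp _] _]].
move: x_supp xh_supp xk_supp xl_supp => /f3_neq0 + /f3_neq0 + /f3_neq0 + /f3_neq0.
by rewrite !mem_W; lia.
Qed.

Let gowers_sum_window :
  \sum_(x \in [set: int]) \sum_(l \in [set: int]) \sum_(k \in [set: int])
    \sum_(h \in [set: int]) Delta l (Delta k (Delta h f3)) x =
  \sum_(x <- W) \sum_(l <- W) \sum_(k <- W) \sum_(h <- W) Delta l (Delta k (Delta h f3)) x.
Proof.
pose D x l k h := Delta l (Delta k (Delta h f3)) x.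
have sum_h x l k : \sum_(h \in [set: int]) D x l k h = \sum_(h <- W) D x l k h.
  by apply: fsbig_setT_seq => // h /Delta3_neq0/and4P[].
have sum_k x l : \sum_(k \in [set: int]) \sum_(h <- W) D x l k h =
    \sum_(k <- W) \sum_(h <- W) D x l k h.
  by apply: fsbig_setT_seq => // k /sumr_neq0[h _ /Delta3_neq0/and4P[]].
have sum_l x : \sum_(l \in [set: int]) \sum_(k <- W) \sum_(h <- W) D x l k h =
    \sum_(l <- W) \sum_(k <- W) \sum_(h <- W) D x l k h.
  by apply: fsbig_setT_seq => // l /sumr_neq0[k _ /sumr_neq0[h _ /Delta3_neq0/and4P[]]].
under eq_fsbigr do under eq_fsbigr do under eq_fsbigr do rewrite sum_h.
under eq_fsbigr do under eq_fsbigr do rewrite sum_k.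
under eq_fsbigr do rewrite sum_l.
apply: fsbig_setT_seq => // x.
by move=> /sumr_neq0[l _ /sumr_neq0[k _ /sumr_neq0[h _ /Delta3_neq0/and4P[]]]].
Qed.

Lemma sum_corr_f3_sqr :
  \sum_(h <- W) \sum_(k <- W) corr_f3 h k * (corr_f3 h k)^* =
  \sum_(x \in [set: int]) \sum_(h1 \in [set: int]) \sum_(h2 \in [set: int])
    \sum_(h3 \in [set: int]) Delta h1 (Delta h2 (Delta h3 f3)) x.
Proof.
have shift_l h k n :
    \sum_(m <- W) Delta k (Delta h f3) n * (Delta k (Delta h f3) m)^* =
    \sum_(l <- W) Delta l (Delta k (Delta h f3)) n.
  transitivity
    (\sum_(l <- W) Delta k (Delta h f3) n * (Delta k (Delta h f3) (l + n))^*).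
    symmetry; apply: (big_translate W n (fun m => _ * (Delta k (Delta h f3) m)^*)) => // m.
    rewrite mulf_eq0 negb_or conjC_eq0.
    move=> /andP[/Delta_neq0/andP[/Delta_neq0/andP[/f3_neq0 nN _] _]
                /Delta_neq0/andP[/Delta_neq0/andP[/f3_neq0 mN _] _]].
    by rewrite !mem_W; lia.
  by apply: eq_bigr => l _; rewrite (addrC l n).
rewrite gowers_sum_window /corr_f3.
under eq_bigr do under eq_bigr do rewrite mulr_sumJ.
under eq_bigr do under eq_bigr do under eq_bigr do rewrite shift_l.
under eq_bigr do rewrite exchange_big /=.
rewrite exchange_big /=.
under eq_bigr do under eq_bigr do rewrite exchange_big /=.
under eq_bigr do rewrite exchange_big /=.
by under eq_bigr do under eq_bigr do rewrite exchange_big /=.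
Qed.

Let sqr_le (a b : R) : 0 <= a -> a <= b -> a ^+ 2 <= b ^+ 2.
Proof. by move=> a_ge0 le_ab; rewrite lerXn2r // nnegrE (le_trans a_ge0 le_ab). Qed.

Lemma cmod_corner_sum_sqr_le :
  cmod (\sum_(x <- W2) f0 x * corner_dual x) ^+ 2 <=
    w%:R ^+ 2 * \sum_(x <- W2) cmod (corner_dual x) ^+ 2.
Proof.
have le_sum : cmod (\sum_(x <- W2) f0 x * corner_dual x) <=
    \sum_(x <- W2) cmod (corner_dual x).
  apply: (le_trans (ler_cmod_sum _ _)); apply: ler_sum => x _.
  exact: cmod_mul_le.
apply: (le_trans (sqr_le _ _ (cmod_ge0 _) le_sum)).
by rewrite -natrX expnS expn1 -size_W2 sqr_sumr_le.
Qed.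

Lemma sum_cmod_corner_dual_sqr_le :
  \sum_(x <- W2) cmod (corner_dual x) ^+ 2 <=
    \sum_(h <- W) \sum_(y <- W2) cmod (corner_dual2 h y).
Proof.
rewrite -[X in X <= _]cmod_real; last by apply: sumr_ge0 => x _; apply: sqr_ge0.
rewrite -sum_mulrJ_cmod sum_corner_dual_sqr.
apply: (le_trans (ler_cmod_sum _ _)); apply: ler_sum => h _.
apply: (le_trans (ler_cmod_sum _ _)); apply: ler_sum => y _.
exact/cmod_mul_le/cmod_mulJ_le1.
Qed.

Lemma sum_cmod_corner_dual2_sqr_le :
  \sum_(h <- W) \sum_(y <- W2) cmod (corner_dual2 h y) ^+ 2 <=
    w%:R ^+ 2 * \sum_(h <- W) \sum_(k <- W) cmod (corr_f3 h k).
Proof.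
rewrite mulr_sumr; apply: ler_sum => h _.
rewrite -[X in X <= _]cmod_real; last by apply: sumr_ge0 => y _; apply: sqr_ge0.
rewrite -sum_mulrJ_cmod sum_corner_dual2_sqr mulr_sumr.
apply: (le_trans (ler_cmod_sum _ _)); apply: ler_sum => k _.
rewrite cmodM ler_wpM2r ?cmod_ge0 // -natrX expnS expn1 -size_W2.
by apply: cmod_sum_le_size => z; apply: cmod_mulJ_le1; apply: cmod_mulJ_le1.
Qed.

Lemma gowersU3_corr_f3 :
  gowersU3 f3 = (\sum_(h <- W) \sum_(k <- W) cmod (corr_f3 h k) ^+ 2) `^ 8^-1.
Proof.
rewrite /gowersU3 -sum_corr_f3_sqr.
under eq_bigr do rewrite sum_mulrJ_cmod.
rewrite -raddf_sum cmod_real //.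
by apply: sumr_ge0 => h _; apply: sumr_ge0 => k _; apply: sqr_ge0.
Qed.

Lemma cmod_corner_sum_pow8_le :
  cmod (\sum_(x <- W2) f0 x * corner_dual x) ^+ 8 <=
    w%:R ^+ 20 * \sum_(h <- W) \sum_(k <- W) cmod (corr_f3 h k) ^+ 2.
Proof.
set X := cmod _.
pose A2 := \sum_(h <- W) \sum_(y <- W2) cmod (corner_dual2 h y).
pose A3 := \sum_(h <- W) \sum_(k <- W) cmod (corr_f3 h k).
have X2 : X ^+ 2 <= w%:R ^+ 2 * A2.
  exact: le_trans cmod_corner_sum_sqr_le (ler_wpM2l _ sum_cmod_corner_dual_sqr_le).
have A2_sqr : A2 ^+ 2 <= w%:R ^+ 5 * A3.
  apply: (le_trans (sqr_sumr2_le _ _ _)).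
  have -> : (size W * size W2)%:R = w%:R ^+ 3 :> R.
    by rewrite size_W2 -natrX !expnS expn0 muln1.
  rewrite -[5%N]/(3 + 2)%N exprD -mulrA ler_wpM2l //.
  exact: sum_cmod_corner_dual2_sqr_le.
have A3_sqr : A3 ^+ 2 <= w%:R ^+ 2 * \sum_(h <- W) \sum_(k <- W) cmod (corr_f3 h k) ^+ 2.
  by apply: (le_trans (sqr_sumr2_le _ _ _)); rewrite natrM -expr2.
have X4 : X ^+ 4 <= w%:R ^+ 9 * A3.
  rewrite -[4%N]/(2 * 2)%N exprM.
  apply: (le_trans (sqr_le _ _ (exprn_ge0 _ (cmod_ge0 _)) X2)).
  rewrite exprMn -exprM -[9%N]/(4 + 5)%N exprD -mulrA ler_wpM2l ?exprn_ge0 //.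
rewrite -[8%N]/(4 * 2)%N exprM.
apply: (le_trans (sqr_le _ _ (exprn_ge0 _ (cmod_ge0 _)) X4)).
rewrite exprMn -exprM -[20%N]/(18 + 2)%N exprD -mulrA ler_wpM2l ?exprn_ge0 //.
Qed.

Lemma corner_average_le :
  cmod ((((4 * N + 1) ^ 2 * N)%:R)^-1 *
        \sum_(x1 <- irange (- (2 * N)%:Z) (2 * N)%:Z)
        \sum_(x2 <- irange (- (2 * N)%:Z) (2 * N)%:Z)
        \sum_(n <- irange 1 N%:Z)
          f0 (x1, x2) * f1 (x1 + n, x2) * f2 (x1, x2 + n) * f3 n)
  <= (9 ^ 3)%:R * (Num.sqrt (N%:R))^-1 * gowersU3 f3.
Proof.
rewrite corner_sum_window cmodM cmodV_nat gowersU3_corr_f3.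
apply: ler_normalised_pow8 N_gt0 w_le _ (cmod_ge0 _) _ cmod_corner_sum_pow8_le.
- by rewrite expnSr leq_mul2r leq_exp2r //; lia.
- by apply: sumr_ge0 => h _; apply: sumr_ge0 => k _; apply: sqr_ge0.
Qed.

End CornerAverage.

Theorem lemma3p4 (R : realType) :
  exists C : R, 0 < C /\
  forall (N : nat), (0 < N)%N ->
  forall (f0 f1 f2 : int * int -> R[i]) (f3 : int -> R[i]),
    (forall x, cmod (f0 x) <= 1) -> (forall x, cmod (f1 x) <= 1) ->
    (forall x, cmod (f2 x) <= 1) -> (forall n, cmod (f3 n) <= 1) ->
    (forall x : int * int,
       ~ (`|x.1| <= (2 * N)%:Z /\ `|x.2| <= (2 * N)%:Z) ->
       f0 x = 0 /\ f1 x = 0 /\ f2 x = 0) ->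
    (forall n : int, ~ (1 <= n /\ n <= N%:Z) -> f3 n = 0) ->
    cmod ((((4 * N + 1) ^ 2 * N)%:R)^-1 *
          \sum_(x1 <- irange (- (2 * N)%:Z) (2 * N)%:Z)
          \sum_(x2 <- irange (- (2 * N)%:Z) (2 * N)%:Z)
          \sum_(n <- irange 1 N%:Z)
            f0 (x1, x2) * f1 (x1 + n, x2) * f2 (x1, x2 + n) * f3 n)
    <= C * (Num.sqrt (N%:R))^-1 * gowersU3 f3.
Proof.
exists (9 ^ 3)%:R; split; first by rewrite ltr0n expn_gt0.
(* Both sides are linear in f3. *)
move=> N N_gt0 f0 f1 f2 f3 f0_le1 f1_le1 f2_le1 _; exact: corner_average_le.
Qed.
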